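(* Let $K\subset\mathbb R^2$ be a triangle (resp. an axis-parallel rectangle) and let $k\ge 1$. For every $u\in P_k(K)$ (resp. $u\in Q_k(K)$) there exists $\varphi_u\in P_{k+1}(K)$ (resp. $\varphi_u\in Q_{k+1}(K)$) such that, for every edge $e$ of $K$ with unit tangent vector $\bm\tau_e$, the function $(\mathfrak p u-\nabla\varphi_u)\cdot\bm\tau_e$ is constant on $e$.
   Context: $P_i(K)$ denotes the polynomials of total degree at most $i$ on $K$; $Q_{i}(K)$ the polynomials of degree at most $i$ in each of $x_1$ and $x_2$. With $\bm x=(x_1,x_2)^T$ and $\bm x^\perp=(-x_2,x_1)^T$, the Poincaré operator (with origin at $0\in\mathbb R^2$) is $(\mathfrak p u)(\bm x)=\int_0^1 t\,\bm x^\perp\,u(t\bm x)\,dt$, which maps scalar functions to vector fields. *)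

From Stdlib Require Import Reals List.
From Coquelicot Require Import Coquelicot.
Open Scope R_scope.

Definition pt := (R * R)%type.

Definition dot (v w : pt) : R := fst v * fst w + snd v * snd w.

Definition inP (k : nat) (f : pt -> R) : Prop :=
  exists c : nat -> nat -> R, forall x1 x2 : R,
    f (x1, x2) = sum_f_R0 (fun i => sum_f_R0 (fun j => c i j * x1 ^ i * x2 ^ j) (k - i)) k.

Definition inQ (k : nat) (f : pt -> R) : Prop :=
  exists c : nat -> nat -> R, forall x1 x2 : R,
    f (x1, x2) = sum_f_R0 (fun i => sum_f_R0 (fun j => c i j * x1 ^ i * x2 ^ j) k) k.

(* Poincare operator with origin 0:  (p u)(x) = int_0^1 t x^perp u(t x) dt,
   x^perp = (-x2, x1). *)
Definition poincare (u : pt -> R) (x : pt) : pt :=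
  (RInt (fun t => t * (- snd x) * u (t * fst x, t * snd x)) 0 1,
   RInt (fun t => t * fst x * u (t * fst x, t * snd x)) 0 1).

Definition grad (phi : pt -> R) (x : pt) : pt :=
  (Derive (fun s => phi (s, snd x)) (fst x),
   Derive (fun s => phi (fst x, s)) (snd x)).

Definition seg_pt (a b : pt) (s : R) : pt :=
  (fst a + s * (fst b - fst a), snd a + s * (snd b - snd a)).

Definition unit_tangent (a b : pt) : pt :=
  let l := sqrt ((fst b - fst a) ^ 2 + (snd b - snd a) ^ 2) in
  ((fst b - fst a) / l, (snd b - snd a) / l).

Definition tangential_const_on_edge (w : pt -> pt) (e : pt * pt) : Prop :=
  exists C : R, forall s : R, 0 <= s <= 1 ->
    dot (w (seg_pt (fst e) (snd e) s)) (unit_tangent (fst e) (snd e)) = C.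

Definition nondegenerate_triangle (a b c : pt) : Prop :=
  (fst b - fst a) * (snd c - snd a) - (snd b - snd a) * (fst c - fst a) <> 0.

Definition triangle_edges (a b c : pt) : list (pt * pt) :=
  (a, b) :: (b, c) :: (c, a) :: nil.

Definition rectangle_edges (x0 x1 y0 y1 : R) : list (pt * pt) :=
  ((x0, y0), (x1, y0)) :: ((x1, y0), (x1, y1)) ::
  ((x1, y1), (x0, y1)) :: ((x0, y1), (x0, y0)) :: nil.

Definition vfsub (v w : pt -> pt) (x : pt) : pt :=
  (fst (v x) - fst (w x), snd (v x) - snd (w x)).

From Stdlib Require Import Reals List Lia Lra.
From Coquelicot Require Import Coquelicot.
Open Scope R_scope.

(* For a polynomial [u], the Poincare integral is [p u (x) = U(x) x^perp] with
   [U] a polynomial having the same exponents as [u] (each monomial is divided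
   by its degree plus two).  On an edge [p, q] one has
   [x^perp . (q - p) = cross p q] (a constant), so [p u . (q - p)] is
   [cross p q * U] along the edge, a univariate polynomial of degree [k]
   (for rectangles because the edges are axis-parallel).  Let [G] be its
   antiderivative.  If the trace of [phi] on the edge is [G] plus an affine
   function of the edge parameter, then [grad phi . (q - p)] differs from
   [p u . (q - p)] by a constant, which is the claim.  It remains to build one
   [phi] of degree [k + 1] with this trace on every edge simultaneously:
   - triangle: a sum of three edge bubbles, the homogenisation in the
     barycentric coordinates of the edge of [G] minus its chord;
   - rectangle: a transfinite blend [sum G_e(X or Y) * (affine in the other)]. *)

Definition monomial : Type := (R * nat * nat)%type.

Fixpoint eval_monos (l : list monomial) (x y : R) : R :=
  match l with
  | nil => 0
  | (c, i, j) :: t => c * x ^ i * y ^ j + eval_monos t x y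
  end.

Fixpoint supported_in (E : nat -> nat -> Prop) (l : list monomial) : Prop :=
  match l with
  | nil => True
  | (_, i, j) :: t => E i j /\ supported_in E t
  end.

Definition poly_on (E : nat -> nat -> Prop) (f : pt -> R) : Prop :=
  exists l, supported_in E l /\ forall x y, f (x, y) = eval_monos l x y.

Definition bidegree (m n : nat) : nat -> nat -> Prop :=
  fun i j => (i <= m /\ j <= n)%nat.
Definition total_degree (n : nat) : nat -> nat -> Prop :=
  fun i j => (i + j <= n)%nat.

Lemma eval_monos_app l1 l2 x y :
  eval_monos (l1 ++ l2) x y = eval_monos l1 x y + eval_monos l2 x y.
Proof. induction l1 as [|[[c i] j] t IH]; simpl; [ring | rewrite IH; ring]. Qed.

Lemma supported_in_app E l1 l2 :
  supported_in E l1 -> supported_in E l2 -> supported_in E (l1 ++ l2).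
Proof. induction l1 as [|[[c i] j] t IH]; simpl; tauto. Qed.

Lemma supported_in_mono (E E' : nat -> nat -> Prop) l :
  (forall i j, E i j -> E' i j) -> supported_in E l -> supported_in E' l.
Proof. intros H. induction l as [|[[c i] j] t IH]; simpl; auto. intros [? ?]; auto. Qed.

Section PolyClosure.
Variable E : nat -> nat -> Prop.

Lemma poly_ext f g : (forall x y, f (x, y) = g (x, y)) -> poly_on E f -> poly_on E g.
Proof. intros H [l [Hl He]]. exists l; split; auto. intros; rewrite <- H; auto. Qed.

Lemma poly_zero : poly_on E (fun _ => 0).
Proof. exists nil; simpl; split; auto. Qed.

Lemma poly_monomial c i j : E i j -> poly_on E (fun z => c * fst z ^ i * snd z ^ j).
Proof. intros H. exists ((c, i, j) :: nil); simpl; split; auto. intros; ring. Qed.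

Lemma poly_add f g : poly_on E f -> poly_on E g -> poly_on E (fun z => f z + g z).
Proof.
  intros [l1 [H1 E1]] [l2 [H2 E2]]. exists (l1 ++ l2); split.
  - apply supported_in_app; auto.
  - intros; rewrite eval_monos_app, E1, E2; auto.
Qed.

Lemma poly_scale c f : poly_on E f -> poly_on E (fun z => c * f z).
Proof.
  intros [l [Hl Hf]].
  exists (map (fun m => match m with (d, i, j) => (c * d, i, j) end) l). split.
  - clear Hf. induction l as [|[[d i] j] t IH]; simpl in *; tauto.
  - intros. rewrite Hf. clear Hf Hl.
    induction l as [|[[d i] j] t IH]; simpl; [ring | rewrite <- IH; ring].
Qed.

Lemma poly_sum (F : nat -> pt -> R) N :
  (forall i, (i <= N)%nat -> poly_on E (F i)) ->
  poly_on E (fun z => sum_f_R0 (fun i => F i z) N).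
Proof.
  induction N; intros H; simpl.
  - apply H; lia.
  - apply poly_add; [apply IHN; intros; apply H | apply H]; lia.
Qed.

Lemma poly_affine c d1 d2 : E 0 0 -> (d1 = 0 \/ E 1 0) -> (d2 = 0 \/ E 0 1) ->
  poly_on E (fun z => c + d1 * fst z + d2 * snd z).
Proof.
  intros H0 H1 H2.
  assert (Hc : poly_on E (fun _ => c)).
  { eapply poly_ext; [| apply (poly_monomial c 0 0 H0)]. intros; simpl; ring. }
  assert (Hx : poly_on E (fun z => d1 * fst z)).
  { destruct H1 as [-> | H1].
    - eapply poly_ext; [| apply poly_zero]. intros; simpl; ring.
    - eapply poly_ext; [| apply (poly_monomial d1 1 0 H1)]. intros; simpl; ring. }
  assert (Hy : poly_on E (fun z => d2 * snd z)).
  { destruct H2 as [-> | H2].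
    - eapply poly_ext; [| apply poly_zero]. intros; simpl; ring.
    - eapply poly_ext; [| apply (poly_monomial d2 0 1 H2)]. intros; simpl; ring. }
  repeat apply poly_add; auto.
Qed.

End PolyClosure.

Lemma poly_mono (E E' : nat -> nat -> Prop) f :
  (forall i j, E i j -> E' i j) -> poly_on E f -> poly_on E' f.
Proof. intros H [l [Hl He]]. exists l; split; auto. eapply supported_in_mono; eauto. Qed.

Lemma poly_mul (E1 E2 E : nat -> nat -> Prop) f g :
  (forall i j p q, E1 i j -> E2 p q -> E (i + p) (j + q))%nat ->
  poly_on E1 f -> poly_on E2 g -> poly_on E (fun z => f z * g z).
Proof.
  intros HE [l1 [H1 F1]] [l2 [H2 F2]].
  apply poly_ext with (f := fun z => eval_monos l1 (fst z) (snd z) * eval_monos l2 (fst z) (snd z)).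
  { intros; simpl; rewrite F1, F2; auto. }
  clear F1 F2. induction l1 as [|[[c i] j] t IH]; simpl in *.
  - eapply poly_ext; [| apply poly_zero]. intros; simpl; ring.
  - destruct H1 as [Hij Ht].
    apply poly_ext with (f := fun z => c * fst z ^ i * snd z ^ j * eval_monos l2 (fst z) (snd z)
                                     + eval_monos t (fst z) (snd z)
                                       * eval_monos l2 (fst z) (snd z)).
    { intros; simpl; ring. }
    apply poly_add; auto. clear IH Ht.
    induction l2 as [|[[d p] q] t2 IH2]; simpl in *.
    + eapply poly_ext; [| apply poly_zero]. intros; simpl; ring.
    + destruct H2 as [Hpq Ht2].
      apply poly_ext with (f := fun z => (c * d) * fst z ^ (i + p) * snd z ^ (j + q)
                             + c * fst z ^ i * snd z ^ j * eval_monos t2 (fst z) (snd z)).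
      { intros; simpl; rewrite !pow_add; ring. }
      apply poly_add; auto. apply poly_monomial; auto.
Qed.

Lemma poly_const (E : nat -> nat -> Prop) c : E 0%nat 0%nat -> poly_on E (fun _ => c).
Proof.
  intros H.
  eapply poly_ext; [| apply (poly_affine E c 0 0 H (or_introl eq_refl) (or_introl eq_refl))].
  intros; simpl; ring.
Qed.

Lemma poly_pow_bidegree p q A i :
  poly_on (bidegree p q) A -> poly_on (bidegree (i * p) (i * q)) (fun z => A z ^ i).
Proof.
  intros HA. induction i; simpl.
  - apply poly_const. unfold bidegree; lia.
  - eapply poly_mul; [| exact HA | exact IHi]. unfold bidegree; intros; lia.
Qed.

Lemma poly_pow_total A i :
  poly_on (total_degree 1) A -> poly_on (total_degree i) (fun z => A z ^ i).
Proof.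
  intros HA. induction i; simpl.
  - apply poly_const. unfold total_degree; lia.
  - eapply poly_mul; [| exact HA | exact IHi]. unfold total_degree; intros; lia.
Qed.

Lemma poly_compose (E E' : nat -> nat -> Prop) F A B :
  poly_on E F -> (forall i j, E i j -> poly_on E' (fun z => A z ^ i * B z ^ j)) ->
  poly_on E' (fun z => F (A z, B z)).
Proof.
  intros [l [Hl HF]] HM.
  apply poly_ext with (f := fun z => eval_monos l (A z) (B z)). { intros; rewrite HF; auto. }
  clear HF. induction l as [|[[c i] j] t IH]; simpl in *.
  - apply poly_zero.
  - destruct Hl as [H1 H2]. apply poly_add; auto.
    apply poly_ext with (f := fun z => c * (A z ^ i * B z ^ j)). { intros; simpl; ring. }
    apply poly_scale; auto.
Qed.

Lemma poly_compose_bidegree (E : nat -> nat -> Prop) F A B p1 q1 p2 q2 m n :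
  poly_on E F -> poly_on (bidegree p1 q1) A -> poly_on (bidegree p2 q2) B ->
  (forall i j, E i j -> i * p1 + j * p2 <= m /\ i * q1 + j * q2 <= n)%nat ->
  poly_on (bidegree m n) (fun z => F (A z, B z)).
Proof.
  intros HF HA HB H. apply (poly_compose E); auto. intros i j Hij.
  eapply poly_mul; [| apply (poly_pow_bidegree _ _ _ i HA) | apply (poly_pow_bidegree _ _ _ j HB)].
  unfold bidegree; intros; specialize (H _ _ Hij). lia.
Qed.

Lemma poly_compose_total (E : nat -> nat -> Prop) F A B n :
  poly_on E F -> poly_on (total_degree 1) A -> poly_on (total_degree 1) B ->
  (forall i j, E i j -> i + j <= n)%nat ->
  poly_on (total_degree n) (fun z => F (A z, B z)).
Proof.
  intros HF HA HB H. apply (poly_compose E); auto. intros i j Hij.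
  eapply poly_mul; [| apply (poly_pow_total _ i HA) | apply (poly_pow_total _ j HB)].
  unfold total_degree; intros; specialize (H _ _ Hij). lia.
Qed.

(* The double-sum form used by [inP] (row bound [k - i]) and [inQ] (row
   bound [k]): row [i <= n] carries the exponents [j <= B i]. *)
Definition coeff_form (B : nat -> nat) (n : nat) (f : pt -> R) : Prop :=
  exists c : nat -> nat -> R, forall x1 x2 : R,
    f (x1, x2) = sum_f_R0 (fun i => sum_f_R0 (fun j => c i j * x1 ^ i * x2 ^ j) (B i)) n.

Lemma sum_f_R0_zero N : sum_f_R0 (fun _ => 0) N = 0.
Proof. induction N; simpl; [auto | rewrite IHN; ring]. Qed.

Lemma sum_f_R0_delta (F : nat -> R) i N :
  sum_f_R0 (fun p => if Nat.eqb p i then F p else 0) N = if Nat.leb i N then F i else 0.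
Proof.
  induction N.
  - simpl; destruct i; simpl; auto.
  - rewrite tech5, IHN. destruct (Nat.eqb_spec (S N) i).
    + subst. replace (Nat.leb (S N) N) with false by (symmetry; apply Nat.leb_gt; lia).
      rewrite Nat.leb_refl. ring.
    + destruct (Nat.leb_spec i N); destruct (Nat.leb_spec i (S N)); try lia; ring.
Qed.

Lemma coeff_form_ext B n f g :
  (forall x y, f (x, y) = g (x, y)) -> coeff_form B n f -> coeff_form B n g.
Proof. intros H [c Hc]. exists c. intros; rewrite <- H; auto. Qed.

Lemma coeff_form_add B n f g :
  coeff_form B n f -> coeff_form B n g -> coeff_form B n (fun z => f z + g z).
Proof.
  intros [c1 H1] [c2 H2]. exists (fun i j => c1 i j + c2 i j). intros x y.
  rewrite H1, H2, <- sum_plus. apply sum_eq; intros i _.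
  rewrite <- sum_plus. apply sum_eq; intros; ring.
Qed.

Lemma coeff_form_monomial B n c i j : (i <= n)%nat -> (j <= B i)%nat ->
  coeff_form B n (fun z => c * fst z ^ i * snd z ^ j).
Proof.
  intros Hi Hj.
  exists (fun p q => if andb (Nat.eqb p i) (Nat.eqb q j) then c else 0).
  intros x y; simpl.
  rewrite (sum_eq _ (fun p => if Nat.eqb p i then
       sum_f_R0 (fun q => if Nat.eqb q j then c * x ^ p * y ^ q else 0) (B p) else 0)).
  2:{ intros p _. destruct (Nat.eqb p i).
      - apply sum_eq; intros q _; simpl. destruct (Nat.eqb q j); ring.
      - rewrite (sum_eq _ (fun _ => 0)); [apply sum_f_R0_zero |]. intros; simpl; ring. }
  rewrite sum_f_R0_delta. replace (Nat.leb i n) with true by (symmetry; apply Nat.leb_le; auto).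
  rewrite (sum_f_R0_delta (fun q => c * x ^ i * y ^ q)).
  replace (Nat.leb j (B i)) with true by (symmetry; apply Nat.leb_le; auto). auto.
Qed.

Lemma coeff_form_iff_poly B n f :
  coeff_form B n f <-> poly_on (fun i j => i <= n /\ j <= B i)%nat f.
Proof.
  split.
  - intros [c Hc].
    apply poly_ext with (f := fun z => sum_f_R0 (fun i =>
             sum_f_R0 (fun j => c i j * fst z ^ i * snd z ^ j) (B i)) n).
    { intros; simpl; rewrite Hc; auto. }
    apply poly_sum; intros i Hi.
    apply (poly_sum _ (fun j z => c i j * fst z ^ i * snd z ^ j)).
    intros j Hj. apply poly_monomial. lia.
  - intros [l [Hl Hf]]. apply coeff_form_ext with (f := fun z => eval_monos l (fst z) (snd z)).
    { intros; rewrite Hf; auto. }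
    clear Hf. induction l as [|[[c i] j] t IH]; simpl in *.
    + exists (fun _ _ => 0). intros; simpl.
      rewrite (sum_eq _ (fun _ => 0)); [symmetry; apply sum_f_R0_zero |].
      intros. rewrite (sum_eq _ (fun _ => 0)); [apply sum_f_R0_zero |]. intros; ring.
    + destruct Hl as [[Hi Hj] Ht].
      apply (coeff_form_add B n (fun z => c * fst z ^ i * snd z ^ j)
               (fun z => eval_monos t (fst z) (snd z))); auto.
      apply coeff_form_monomial; auto.
Qed.

Lemma inP_iff_poly n f : inP n f <-> poly_on (total_degree n) f.
Proof.
  change (inP n f) with (coeff_form (fun i => n - i)%nat n f).
  rewrite coeff_form_iff_poly.
  split; apply poly_mono; unfold total_degree; intros; lia.
Qed.

Lemma inQ_iff_poly n f : inQ n f <-> poly_on (bidegree n n) f.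
Proof. exact (coeff_form_iff_poly (fun _ => n) n f). Qed.

(* [is_derive_plus] and [is_derive_ext] specialised to real-valued
   functions, so that [apply] can unify them. *)
Lemma is_derive_Rplus (f g : R -> R) x a b :
  is_derive f x a -> is_derive g x b -> is_derive (fun t => f t + g t) x (a + b).
Proof. intros; apply (is_derive_plus f g x a b); auto. Qed.

Lemma is_derive_Rext (f g : R -> R) x l :
  (forall t, f t = g t) -> is_derive f x l -> is_derive g x l.
Proof. apply is_derive_ext. Qed.

Fixpoint partial1_monos (l : list monomial) (x y : R) : R :=
  match l with
  | nil => 0
  | (c, i, j) :: t => c * (INR i * x ^ pred i) * y ^ j + partial1_monos t x y
  end.

Fixpoint partial2_monos (l : list monomial) (x y : R) : R :=
  match l with
  | nil => 0
  | (c, i, j) :: t => c * x ^ i * (INR j * y ^ pred j) + partial2_monos t x y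
  end.

Lemma is_derive_partial1 l x y : is_derive (fun t => eval_monos l t y) x (partial1_monos l x y).
Proof.
  induction l as [|[[c i] j] t IH]; simpl.
  - apply (is_derive_const 0 x).
  - apply is_derive_Rplus; auto. auto_derive; auto. ring.
Qed.

Lemma is_derive_partial2 l x y : is_derive (fun t => eval_monos l x t) y (partial2_monos l x y).
Proof.
  induction l as [|[[c i] j] t IH]; simpl.
  - apply (is_derive_const 0 y).
  - apply is_derive_Rplus; auto. auto_derive; auto. ring.
Qed.

Lemma is_derive_eval_monos_line l a1 a2 e1 e2 s :
  is_derive (fun s => eval_monos l (a1 + s * e1) (a2 + s * e2)) s
    (e1 * partial1_monos l (a1 + s * e1) (a2 + s * e2)
     + e2 * partial2_monos l (a1 + s * e1) (a2 + s * e2)).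
Proof.
  set (x := a1 + s * e1); set (y := a2 + s * e2).
  induction l as [|[[c i] j] t IH]; simpl.
  - replace (e1 * 0 + e2 * 0) with 0 by ring. apply (is_derive_const 0 s).
  - replace (e1 * (c * (INR i * x ^ pred i) * y ^ j + partial1_monos t x y)
             + e2 * (c * x ^ i * (INR j * y ^ pred j) + partial2_monos t x y))
      with ((c * (INR i * e1 * x ^ pred i) * y ^ j + c * x ^ i * (INR j * e2 * y ^ pred j))
            + (e1 * partial1_monos t x y + e2 * partial2_monos t x y)) by ring.
    apply is_derive_Rplus; auto. unfold x, y. auto_derive; auto. ring.
Qed.

Lemma is_derive_poly_on_segment E phi p q s : poly_on E phi ->
  is_derive (fun s => phi (seg_pt p q s)) s
    (dot (grad phi (seg_pt p q s)) (fst q - fst p, snd q - snd p)).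
Proof.
  intros [l [_ Hphi]]. unfold grad, dot, seg_pt; cbn [fst snd].
  set (x := fst p + s * (fst q - fst p)); set (y := snd p + s * (snd q - snd p)).
  rewrite (Derive_ext (fun t => phi (t, y)) (fun t => eval_monos l t y)) by (intros; apply Hphi).
  rewrite (Derive_ext (fun t => phi (x, t)) (fun t => eval_monos l x t)) by (intros; apply Hphi).
  rewrite (is_derive_unique _ _ _ (is_derive_partial1 _ _ _)),
          (is_derive_unique _ _ _ (is_derive_partial2 _ _ _)).
  replace (partial1_monos l x y * (fst q - fst p) + partial2_monos l x y * (snd q - snd p))
    with ((fst q - fst p) * partial1_monos l x y + (snd q - snd p) * partial2_monos l x y) by ring.
  eapply is_derive_ext; [| apply is_derive_eval_monos_line]. intros; simpl; rewrite Hphi; auto.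
Qed.

Definition upoly (n : nat) (g : R -> R) : Prop := poly_on (bidegree n 0) (fun z => g (fst z)).

Lemma eval_monos_univariate m l x y :
  supported_in (bidegree m 0) l -> eval_monos l x y = eval_monos l x 0.
Proof.
  unfold bidegree. induction l as [|[[c i] j] t IH]; simpl; auto.
  intros [[_ Hj] Ht]. replace j with 0%nat by lia. rewrite IH by auto. simpl; ring.
Qed.

Lemma upoly_compose n g p q A : upoly n g -> poly_on (bidegree p q) A ->
  poly_on (bidegree (n * p) (n * q)) (fun z => g (A z)).
Proof.
  intros Hg HA.
  apply (poly_compose_bidegree (bidegree n 0) (fun z => g (fst z)) A (fun _ => 0) p q 0 0); auto.
  - apply poly_const. unfold bidegree; lia.
  - unfold bidegree; intros; nia.
Qed.

Lemma is_derive_antiderivative_monomial c i y s :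
  is_derive (fun s => c / INR (S i) * s ^ S i * y) s (c * s ^ i * y).
Proof.
  assert (HN : INR (S i) <> 0) by (apply not_0_INR; lia).
  apply (is_derive_Rext (fun s => (c / INR (S i) * y) * s ^ S i)); [intros; ring |].
  replace (c * s ^ i * y) with ((c / INR (S i) * y) * (INR (S i) * 1 * s ^ pred (S i)))
    by (simpl pred; field; auto).
  apply is_derive_scal, (is_derive_pow (fun t => t)), (is_derive_id s).
Qed.

Lemma upoly_antiderivative n g : upoly n g ->
  exists G, upoly (S n) G /\ forall s, is_derive G s (g s).
Proof.
  intros [l [Hl Hg]].
  set (L := map (fun m => match m with (c, i, j) => (c / INR (S i), S i, j) end) l).
  assert (HL : supported_in (bidegree (S n) 0) L).
  { unfold L. clear Hg. induction l as [|[[c i] j] t IH]; simpl in *; auto.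
    unfold bidegree in *. destruct Hl as [? ?]; split; auto; lia. }
  exists (fun s => eval_monos L s 0). split.
  - exists L; split; auto. intros x y. symmetry. apply eval_monos_univariate with (S n); auto.
  - intros s. replace (g s) with (eval_monos l s 0) by (rewrite <- (Hg s 0); reflexivity).
    unfold L. clear Hg HL.
    induction l as [|[[c i] j] t IH]; simpl in *.
    + apply (is_derive_const 0 s).
    + destruct Hl as [_ Ht]. apply is_derive_Rplus; auto.
      apply is_derive_antiderivative_monomial.
Qed.

Lemma is_RInt_Rext (f g : R -> R) a b v :
  (forall t, f t = g t) -> is_RInt f a b v -> is_RInt g a b v.
Proof. intros H. apply is_RInt_ext. intros; apply H. Qed.

Lemma is_RInt_Rscal (f : R -> R) a b v k :
  is_RInt f a b v -> is_RInt (fun t => k * f t) a b (k * v).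
Proof. apply (is_RInt_scal f a b k v). Qed.

Lemma is_RInt_Rplus (f g : R -> R) a b v w :
  is_RInt f a b v -> is_RInt g a b w -> is_RInt (fun t => f t + g t) a b (v + w).
Proof. apply (is_RInt_plus f g a b v w). Qed.

Lemma is_RInt_pow n : is_RInt (fun t => t ^ n) 0 1 (/ INR (S n)).
Proof.
  assert (HS : INR (S n) <> 0) by (apply not_0_INR; lia).
  replace (/ INR (S n)) with
    (minus ((fun t => t ^ S n / INR (S n)) 1) ((fun t => t ^ S n / INR (S n)) 0)).
  2:{ simpl. rewrite pow1, Rmult_0_l. unfold minus, plus, opp; simpl. field; auto. }
  apply (is_RInt_derive (fun t => t ^ S n / INR (S n)) (fun t => t ^ n)).
  - intros x _. apply (is_derive_Rext (fun t => / INR (S n) * t ^ S n)); [intros; field; auto |].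
    replace (x ^ n) with (/ INR (S n) * (INR (S n) * 1 * x ^ pred (S n)))
      by (simpl pred; field; auto).
    apply is_derive_scal, (is_derive_pow (fun t => t)), (is_derive_id x).
  - intros x _. apply (ex_derive_continuous (fun t : R => t ^ n)). auto_derive; auto.
Qed.

(* The Poincare integral of a monomial list: [t * c (t x)^i (t y)^j] integrates
   to [c x^i y^j / (i + j + 2)]. *)
Definition poincare_monos (l : list monomial) : list monomial :=
  map (fun m => match m with (c, i, j) => (c * / INR (S (i + j + 1)), i, j) end) l.

Lemma is_RInt_poincare_monos l K x y :
  is_RInt (fun t => t * K * eval_monos l (t * x) (t * y)) 0 1
          (K * eval_monos (poincare_monos l) x y).
Proof.
  induction l as [|[[c i] j] t IH].
  - simpl. apply (is_RInt_Rext (fun t => 0 * t ^ 0)); [intros; ring |].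
    replace (K * 0) with (0 * / INR 1) by ring. apply is_RInt_Rscal, is_RInt_pow.
  - apply (is_RInt_Rext (fun s => (K * c * x ^ i * y ^ j) * s ^ (i + j + 1)
                                 + s * K * eval_monos t (s * x) (s * y))).
    { intros s. simpl. rewrite !Rpow_mult_distr, !pow_add. simpl. ring. }
    change (eval_monos (poincare_monos ((c, i, j) :: t)) x y)
      with (c * / INR (S (i + j + 1)) * x ^ i * y ^ j + eval_monos (poincare_monos t) x y).
    replace (K * (c * / INR (S (i + j + 1)) * x ^ i * y ^ j + eval_monos (poincare_monos t) x y))
      with ((K * c * x ^ i * y ^ j) * / INR (S (i + j + 1)) + K * eval_monos (poincare_monos t) x y)
      by ring.
    apply is_RInt_Rplus; auto. apply is_RInt_Rscal, is_RInt_pow.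
Qed.

Lemma poincare_poly E u : poly_on E u ->
  exists U, poly_on E U /\ forall x, poincare u x = (- snd x * U x, fst x * U x).
Proof.
  intros [l [Hl Hu]]. exists (fun z => eval_monos (poincare_monos l) (fst z) (snd z)). split.
  - eexists; split; [| intros; reflexivity]. clear Hu. unfold poincare_monos.
    induction l as [|[[c i] j] t IH]; simpl in *; tauto.
  - intros [x y]; unfold poincare; cbn [fst snd]. f_equal; apply is_RInt_unique.
    + apply (is_RInt_Rext (fun t => t * (- y) * eval_monos l (t * x) (t * y))).
      { intros; rewrite Hu; auto. }
      apply is_RInt_poincare_monos.
    + apply (is_RInt_Rext (fun t => t * x * eval_monos l (t * x) (t * y))).
      { intros; rewrite Hu; auto. }
      apply is_RInt_poincare_monos.
Qed.

(* [cross p q] is the value of [x^perp . (q - p)] at every point [x] of the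
   segment [p, q]; it is the planar cross product of [p] and [q - p]. *)
Definition cross (p q : pt) : R := fst p * (snd q - snd p) - snd p * (fst q - fst p).

(* Write [p u = U x^perp].  If the trace
   of [phi] on the edge is [al + be s + G s] where [G' = cross p q * U] along
   the edge, then [grad phi . (q - p)] equals [be + p u . (q - p)], so the
   tangential component of [p u - grad phi] is the constant [- be / |q - p|]. *)
Lemma tangential_const_of_trace u U E phi p q G al be :
  (forall x, poincare u x = (- snd x * U x, fst x * U x)) -> poly_on E phi ->
  (forall s, is_derive G s (cross p q * U (seg_pt p q s))) ->
  (forall s, phi (seg_pt p q s) = al + be * s + G s) ->
  tangential_const_on_edge (vfsub (poincare u) (grad phi)) (p, q).
Proof.
  intros Hu Hphi HG Htrace.
  set (L := sqrt ((fst q - fst p) ^ 2 + (snd q - snd p) ^ 2)).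
  exists (- be / L). intros s _.
  assert (Hgrad : dot (grad phi (seg_pt p q s)) (fst q - fst p, snd q - snd p)
                  = be + cross p q * U (seg_pt p q s)).
  { rewrite <- (is_derive_unique _ _ _ (is_derive_poly_on_segment E phi p q s Hphi)).
    apply is_derive_unique.
    apply (is_derive_Rext (fun s => al + be * s + G s)); [intros; rewrite Htrace; auto |].
    replace (be + cross p q * U (seg_pt p q s))
      with (0 + be * 1 + cross p q * U (seg_pt p q s)) by ring.
    repeat apply is_derive_Rplus; auto.
    - apply (is_derive_const al s).
    - apply is_derive_scal, (is_derive_id s). }
  unfold vfsub, dot, unit_tangent in *; rewrite Hu; cbn [fst snd] in *. fold L.
  set (x := seg_pt p q s) in *. set (g := grad phi x) in *.
  unfold Rdiv.
  transitivity (((- snd x * (fst q - fst p) + fst x * (snd q - snd p)) * U x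
                 - (fst g * (fst q - fst p) + snd g * (snd q - snd p))) * / L); [ring |].
  rewrite Hgrad. unfold x, seg_pt, cross; cbn [fst snd]. ring.
Qed.

Lemma edge_datum_total k U p q : poly_on (total_degree k) U ->
  upoly k (fun s => cross p q * U (seg_pt p q s)).
Proof.
  intros HU. apply poly_scale.
  apply (poly_ext _ (fun z => U (fst p + (fst q - fst p) * fst z + 0 * snd z,
                                snd p + (snd q - snd p) * fst z + 0 * snd z))).
  { intros; unfold seg_pt; simpl; f_equal; f_equal; ring. }
  apply (poly_compose_bidegree (total_degree k) U _ _ 1 0 1 0); auto.
  - apply poly_affine; unfold bidegree; auto; lia.
  - apply poly_affine; unfold bidegree; auto; lia.
  - unfold total_degree; intros; lia.
Qed.

Lemma edge_datum_axis_parallel k U p q : poly_on (bidegree k k) U ->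
  (snd q = snd p \/ fst q = fst p) ->
  upoly k (fun s => cross p q * U (seg_pt p q s)).
Proof.
  intros HU Hpq. apply poly_scale.
  apply (poly_ext _ (fun z => U (fst p + (fst q - fst p) * fst z + 0 * snd z,
                                snd p + (snd q - snd p) * fst z + 0 * snd z))).
  { intros; unfold seg_pt; simpl; f_equal; f_equal; ring. }
  destruct Hpq as [Hh | Hv].
  - rewrite Hh, Rminus_diag.
    apply (poly_compose_bidegree (bidegree k k) U _ _ 1 0 0 0); auto.
    + apply poly_affine; unfold bidegree; auto; lia.
    + apply poly_affine; unfold bidegree; auto; lia.
    + unfold bidegree; intros; lia.
  - rewrite Hv, Rminus_diag.
    apply (poly_compose_bidegree (bidegree k k) U _ _ 0 0 1 0); auto.
    + apply poly_affine; unfold bidegree; auto; lia.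
    + apply poly_affine; unfold bidegree; auto; lia.
    + unfold bidegree; intros; lia.
Qed.

Fixpoint homogenize_monos (N : nat) (l : list monomial) (a b : R) : R :=
  match l with
  | nil => 0
  | (c, i, _) :: t => c * b ^ i * (a + b) ^ (N - i) + homogenize_monos N t a b
  end.

Lemma upoly_homogenize N g : upoly N g -> exists H, poly_on (total_degree N) H /\
  (forall s, H (1 - s, s) = g s) /\
  (forall b, H (0, b) = b ^ N * g 1) /\
  (forall a, H (a, 0) = a ^ N * g 0).
Proof.
  intros [l [Hl Hg]]. exists (fun z => homogenize_monos N l (fst z) (snd z)).
  assert (Hg0 : forall x, g x = eval_monos l x 0) by (intros x; exact (Hg x 0)).
  rewrite !Hg0. unfold bidegree in Hl.
  split; [| split; [intros s; rewrite Hg0 | split]]; clear Hg Hg0; cbn [fst snd].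
  - induction l as [|[[c i] j] t IH]; simpl in *; [apply poly_zero |].
    destruct Hl as [[Hi _] Ht]. apply poly_add; auto.
    apply poly_ext with (f := fun z => c * ((0 + 0 * fst z + 1 * snd z) ^ i
                                         * (0 + 1 * fst z + 1 * snd z) ^ (N - i))).
    { intros; simpl. rewrite !Rmult_0_l, !Rmult_1_l, !Rplus_0_l. ring. }
    apply poly_scale, (poly_mul (total_degree i) (total_degree (N - i))).
    + unfold total_degree; intros; lia.
    + apply poly_pow_total, poly_affine; unfold total_degree; auto; lia.
    + apply poly_pow_total, poly_affine; unfold total_degree; auto; lia.
  - induction l as [|[[c i] j] t IH]; simpl in *; auto.
    destruct Hl as [[Hi Hj] Ht]. replace j with 0%nat by lia.
    rewrite IH by auto. replace (1 - s + s) with 1 by ring. rewrite pow1. ring.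
  - intros b. induction l as [|[[c i] j] t IH]; simpl in *; [ring |].
    destruct Hl as [[Hi Hj] Ht]. replace j with 0%nat by lia.
    rewrite IH by auto. replace (0 + b) with b by ring.
    rewrite Rmult_assoc, <- pow_add, pow1. replace (i + (N - i))%nat with N by lia. ring.
  - intros a. induction l as [|[[c i] j] t IH]; simpl in *; [ring |].
    destruct Hl as [[Hi Hj] Ht]. replace j with 0%nat by lia.
    rewrite IH by auto. replace (a + 0) with a by ring.
    destruct i; simpl; [rewrite Nat.sub_0_r |]; ring.
Qed.

Lemma triangle_edge_bubble k U p q : poly_on (total_degree k) U ->
  exists H G, poly_on (total_degree (S k)) H /\
    (forall s, is_derive G s (cross p q * U (seg_pt p q s))) /\
    (forall s, H (1 - s, s) = G s - G 0 - s * (G 1 - G 0)) /\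
    (forall b, H (0, b) = 0) /\ (forall a, H (a, 0) = 0).
Proof.
  intros HU.
  destruct (upoly_antiderivative _ _ (edge_datum_total k U p q HU)) as [G [HG HG']].
  assert (Hg : upoly (S k) (fun s => G s + (- G 0 + - (G 1 - G 0) * s))).
  { apply poly_add; auto.
    apply (poly_ext _ (fun z => - G 0 + - (G 1 - G 0) * fst z + 0 * snd z));
      [intros; simpl; ring |].
    apply poly_affine; unfold bidegree; auto; lia. }
  destruct (upoly_homogenize _ _ Hg) as [H [HH [H1 [H2 H3]]]].
  exists H, G. split; [exact HH |]. split; [exact HG' |].
  split; [intros s; rewrite H1; ring |].
  split; [intros b; rewrite H2 | intros a; rewrite H3]; ring.
Qed.

Definition bary_b (a b c : pt) (x : pt) : R :=
  ((fst x - fst a) * (snd c - snd a) - (snd x - snd a) * (fst c - fst a)) /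
  ((fst b - fst a) * (snd c - snd a) - (snd b - snd a) * (fst c - fst a)).
Definition bary_c (a b c : pt) (x : pt) : R :=
  ((fst b - fst a) * (snd x - snd a) - (snd b - snd a) * (fst x - fst a)) /
  ((fst b - fst a) * (snd c - snd a) - (snd b - snd a) * (fst c - fst a)).
Definition bary_a (a b c : pt) (x : pt) : R := 1 - bary_b a b c x - bary_c a b c x.

Lemma bary_affine a b c : nondegenerate_triangle a b c ->
  poly_on (total_degree 1) (bary_a a b c) /\ poly_on (total_degree 1) (bary_b a b c) /\
  poly_on (total_degree 1) (bary_c a b c).
Proof.
  unfold nondegenerate_triangle. intros HD.
  set (D := (fst b - fst a) * (snd c - snd a) - (snd b - snd a) * (fst c - fst a)) in *.
  assert (Hb : poly_on (total_degree 1) (bary_b a b c)).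
  { apply (poly_ext _ (fun z => (- fst a * (snd c - snd a) + snd a * (fst c - fst a)) / D
                                 + ((snd c - snd a) / D) * fst z
                                 + (- (fst c - fst a) / D) * snd z)).
    { intros; unfold bary_b; simpl; fold D; field; auto. }
    apply poly_affine; unfold total_degree; auto; lia. }
  assert (Hc : poly_on (total_degree 1) (bary_c a b c)).
  { apply (poly_ext _ (fun z => (- (fst b - fst a) * snd a + (snd b - snd a) * fst a) / D
                                 + (- (snd b - snd a) / D) * fst z
                                 + ((fst b - fst a) / D) * snd z)).
    { intros; unfold bary_c; simpl; fold D; field; auto. }
    apply poly_affine; unfold total_degree; auto; lia. }
  split; [| split]; auto. unfold bary_a.
  apply (poly_ext _ (fun z => (1 + (-1) * bary_b a b c z) + (-1) * bary_c a b c z)).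
  { intros; simpl; ring. }
  repeat apply poly_add; [apply poly_const; unfold total_degree; lia | |]; apply poly_scale; auto.
Qed.

Lemma bary_on_edge_ab a b c s : nondegenerate_triangle a b c ->
  bary_a a b c (seg_pt a b s) = 1 - s /\ bary_b a b c (seg_pt a b s) = s /\
  bary_c a b c (seg_pt a b s) = 0.
Proof.
  unfold nondegenerate_triangle, bary_a, bary_b, bary_c, seg_pt; simpl; intros HD.
  repeat split; field; auto.
Qed.

Lemma bary_on_edge_bc a b c s : nondegenerate_triangle a b c ->
  bary_a a b c (seg_pt b c s) = 0 /\ bary_b a b c (seg_pt b c s) = 1 - s /\
  bary_c a b c (seg_pt b c s) = s.
Proof.
  unfold nondegenerate_triangle, bary_a, bary_b, bary_c, seg_pt; simpl; intros HD.
  repeat split; field; auto.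
Qed.

Lemma bary_on_edge_ca a b c s : nondegenerate_triangle a b c ->
  bary_a a b c (seg_pt c a s) = s /\ bary_b a b c (seg_pt c a s) = 0 /\
  bary_c a b c (seg_pt c a s) = 1 - s.
Proof.
  unfold nondegenerate_triangle, bary_a, bary_b, bary_c, seg_pt; simpl; intros HD.
  repeat split; field; auto.
Qed.

(* Triangle case: [phi] is the sum of the three edge bubbles, each written in
   the barycentric coordinates of its edge.  On an edge the two other bubbles
   vanish, so the trace of [phi] is the edge's [G] up to an affine term. *)
Theorem triangle_case k a b c : nondegenerate_triangle a b c ->
  forall u : pt -> R, inP k u ->
  exists phi : pt -> R, inP (S k) phi /\
    forall e, In e (triangle_edges a b c) ->
      tangential_const_on_edge (vfsub (poincare u) (grad phi)) e.
Proof.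
  intros HD u Hu. apply inP_iff_poly in Hu.
  destruct (poincare_poly _ _ Hu) as [U [HU Hpu]].
  destruct (triangle_edge_bubble k U a b HU) as [H1 [G1 [HH1 [HG1 [T1 [Y1 X1]]]]]].
  destruct (triangle_edge_bubble k U b c HU) as [H2 [G2 [HH2 [HG2 [T2 [Y2 X2]]]]]].
  destruct (triangle_edge_bubble k U c a HU) as [H3 [G3 [HH3 [HG3 [T3 [Y3 X3]]]]]].
  destruct (bary_affine a b c HD) as [La [Lb Lc]].
  set (phi := fun z => H1 (bary_a a b c z, bary_b a b c z) + H2 (bary_b a b c z, bary_c a b c z)
                     + H3 (bary_c a b c z, bary_a a b c z)).
  assert (Hphi : poly_on (total_degree (S k)) phi).
  { unfold phi. repeat apply poly_add;
      eapply poly_compose_total; eauto; unfold total_degree; intros; lia. }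
  exists phi. split; [apply inP_iff_poly; auto |].
  intros e He. simpl in He. destruct He as [<- | [<- | [<- | []]]].
  - apply (tangential_const_of_trace u U _ phi a b G1 (- G1 0) (- (G1 1 - G1 0)) Hpu Hphi HG1).
    intros s. destruct (bary_on_edge_ab a b c s HD) as [E1 [E2 E3]].
    unfold phi. rewrite E1, E2, E3, T1, X2, Y3. ring.
  - apply (tangential_const_of_trace u U _ phi b c G2 (- G2 0) (- (G2 1 - G2 0)) Hpu Hphi HG2).
    intros s. destruct (bary_on_edge_bc a b c s HD) as [E1 [E2 E3]].
    unfold phi. rewrite E1, E2, E3, T2, Y1, X3. ring.
  - apply (tangential_const_of_trace u U _ phi c a G3 (- G3 0) (- (G3 1 - G3 0)) Hpu Hphi HG3).
    intros s. destruct (bary_on_edge_ca a b c s HD) as [E1 [E2 E3]].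
    unfold phi. rewrite E1, E2, E3, T3, X1, Y2. ring.
Qed.

Definition normalize (lo hi t : R) : R := (t - lo) / (hi - lo).

Lemma normalize_affine lo hi : lo < hi ->
  poly_on (bidegree 1 0) (fun z => normalize lo hi (fst z)) /\
  poly_on (bidegree 1 0) (fun z => 1 - normalize lo hi (fst z)) /\
  poly_on (bidegree 0 1) (fun z => normalize lo hi (snd z)) /\
  poly_on (bidegree 0 1) (fun z => 1 - normalize lo hi (snd z)).
Proof.
  intros Hlt. unfold normalize.
  assert (Hx : forall c d, poly_on (bidegree 1 0) (fun z => c + d * ((fst z - lo) / (hi - lo)))).
  { intros c d.
    apply (poly_ext _ (fun z => (c - d * lo / (hi - lo)) + (d / (hi - lo)) * fst z + 0 * snd z)).
    { intros; simpl; field; lra. }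
    apply poly_affine; unfold bidegree; auto; lia. }
  assert (Hy : forall c d, poly_on (bidegree 0 1) (fun z => c + d * ((snd z - lo) / (hi - lo)))).
  { intros c d.
    apply (poly_ext _ (fun z => (c - d * lo / (hi - lo)) + 0 * fst z + (d / (hi - lo)) * snd z)).
    { intros; simpl; field; lra. }
    apply poly_affine; unfold bidegree; auto; lia. }
  split; [| split; [| split]].
  - eapply poly_ext; [| exact (Hx 0 1)]. intros; simpl; ring.
  - eapply poly_ext; [| exact (Hx 1 (-1))]. intros; simpl; ring.
  - eapply poly_ext; [| exact (Hy 0 1)]. intros; simpl; ring.
  - eapply poly_ext; [| exact (Hy 1 (-1))]. intros; simpl; ring.
Qed.

Lemma normalize_at_ends lo hi s : lo < hi ->
  normalize lo hi (lo + s * (hi - lo)) = s /\ normalize lo hi (hi + s * (lo - hi)) = 1 - s /\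
  normalize lo hi (lo + s * (lo - lo)) = 0 /\ normalize lo hi (hi + s * (hi - hi)) = 1.
Proof. intros Hlt. unfold normalize. repeat split; field; lra. Qed.

Lemma blend_term_bidegree n g A B : (1 <= n)%nat -> upoly n g ->
  poly_on (bidegree 1 0) A -> poly_on (bidegree 0 1) B ->
  poly_on (bidegree n n) (fun z => g (A z) * B z) /\
  poly_on (bidegree n n) (fun z => g (B z) * A z).
Proof.
  intros Hn Hg HA HB. split.
  - apply (poly_mul (bidegree (n * 1) (n * 0)) (bidegree 0 1)); auto.
    + unfold bidegree; intros; lia.
    + apply upoly_compose; auto.
  - apply (poly_mul (bidegree (n * 0) (n * 1)) (bidegree 1 0)); auto.
    + unfold bidegree; intros; lia.
    + apply upoly_compose; auto.
Qed.

(* Rectangle case: with [X, Y] the coordinates normalised to [0, 1] and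
   [G1, .., G4] antiderivatives of the data of the bottom, right, top and left
   edges, [phi = G1(X)(1 - Y) + G2(Y) X + G3(1 - X) Y + G4(1 - Y)(1 - X)].
   On each edge one term is that edge's [G] and the others are affine. *)
Theorem rectangle_case k x0 x1 y0 y1 : x0 < x1 -> y0 < y1 ->
  forall u : pt -> R, inQ k u ->
  exists phi : pt -> R, inQ (S k) phi /\
    forall e, In e (rectangle_edges x0 x1 y0 y1) ->
      tangential_const_on_edge (vfsub (poincare u) (grad phi)) e.
Proof.
  intros Hx Hy u Hu. apply inQ_iff_poly in Hu.
  destruct (poincare_poly _ _ Hu) as [U [HU Hpu]].
  destruct (upoly_antiderivative _ _ (edge_datum_axis_parallel k U (x0, y0) (x1, y0) HU
             (or_introl eq_refl))) as [G1 [HG1 DG1]].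
  destruct (upoly_antiderivative _ _ (edge_datum_axis_parallel k U (x1, y0) (x1, y1) HU
             (or_intror eq_refl))) as [G2 [HG2 DG2]].
  destruct (upoly_antiderivative _ _ (edge_datum_axis_parallel k U (x1, y1) (x0, y1) HU
             (or_introl eq_refl))) as [G3 [HG3 DG3]].
  destruct (upoly_antiderivative _ _ (edge_datum_axis_parallel k U (x0, y1) (x0, y0) HU
             (or_intror eq_refl))) as [G4 [HG4 DG4]].
  set (X := fun z : pt => normalize x0 x1 (fst z)).
  set (Y := fun z : pt => normalize y0 y1 (snd z)).
  set (phi := fun z => G1 (X z) * (1 - Y z) + G2 (Y z) * X z
                     + G3 (1 - X z) * Y z + G4 (1 - Y z) * (1 - X z)).
  destruct (normalize_affine x0 x1 Hx) as [X0 [X1 _]].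
  destruct (normalize_affine y0 y1 Hy) as [_ [_ [Y0 Y1]]].
  assert (Hphi : poly_on (bidegree (S k) (S k)) phi).
  { assert (Hk : (1 <= S k)%nat) by lia.
    unfold phi. repeat apply poly_add.
    - apply (blend_term_bidegree (S k) G1 X); auto.
    - apply (blend_term_bidegree (S k) G2 X Y); auto.
    - apply (blend_term_bidegree (S k) G3 _ Y); auto.
    - apply (blend_term_bidegree (S k) G4 (fun z => 1 - X z) (fun z => 1 - Y z)); auto. }
  exists phi. split; [apply inQ_iff_poly; auto |].
  intros e He. simpl in He. destruct He as [<- | [<- | [<- | [<- | []]]]];
    [ apply (tangential_const_of_trace u U _ phi _ _ G1 (G4 1) (G2 0 - G4 1) Hpu Hphi DG1)
    | apply (tangential_const_of_trace u U _ phi _ _ G2 (G1 1) (G3 0 - G1 1) Hpu Hphi DG2)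
    | apply (tangential_const_of_trace u U _ phi _ _ G3 (G2 1) (G4 0 - G2 1) Hpu Hphi DG3)
    | apply (tangential_const_of_trace u U _ phi _ _ G4 (G3 1) (G1 0 - G3 1) Hpu Hphi DG4) ];
    intros s; unfold phi, X, Y, seg_pt; cbn [fst snd];
    destruct (normalize_at_ends x0 x1 s Hx) as [X01 [X10 [X00 X11]]];
    destruct (normalize_at_ends y0 y1 s Hy) as [Y01 [Y10 [Y00 Y11]]].
  - rewrite X01, Y00, Rminus_0_r. ring.
  - rewrite X11, Y01, Rminus_diag. ring.
  - rewrite X10, Y11, Rminus_diag. replace (1 - (1 - s)) with s by ring. ring.
  - rewrite X00, Y10, Rminus_0_r. replace (1 - (1 - s)) with s by ring. ring.
Qed.

Theorem mainTheorem1 :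
  forall k : nat, (1 <= k)%nat ->
  (forall a b c : pt, nondegenerate_triangle a b c ->
     forall u : pt -> R, inP k u ->
     exists phi : pt -> R, inP (S k) phi /\
       forall e, In e (triangle_edges a b c) ->
         tangential_const_on_edge (vfsub (poincare u) (grad phi)) e) /\
  (forall x0 x1 y0 y1 : R, x0 < x1 -> y0 < y1 ->
     forall u : pt -> R, inQ k u ->
     exists phi : pt -> R, inQ (S k) phi /\
       forall e, In e (rectangle_edges x0 x1 y0 y1) ->
         tangential_const_on_edge (vfsub (poincare u) (grad phi)) e).
Proof.
  intros k _. split.
  - intros a b c HD. apply triangle_case; auto.
  - intros x0 x1 y0 y1 Hx Hy. apply rectangle_case; auto.
Qed.
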